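(* Let $n\ge2$, $1\le k<n$, $\alpha_1>0$, $\alpha_2>\alpha_3>0$, and let $S_{AV}=\{i_1,\dots,i_k\}\subseteq\{1,\dots,n\}$ be the set of AV indices. For the mixed traffic system $\dot x=A_kx+B_ku$ (defined in the context): (1) $(A_k,B_k)$ is not completely controllable; the vector $w=(1,0,1,0,\dots,1,0)^{\mathsf T}\in\mathbb R^{2n}$ satisfies $w^{\mathsf T}A_k=0$, $w^{\mathsf T}B_k=0$, so $\sum_{i=1}^n\tilde s_i(t)$ is constant along all trajectories, and $0$ is an uncontrollable eigenvalue whose algebraic multiplicity in the uncontrollable part is one. (2) $(A_k,B_k)$ is stabilizable in the sense that every eigenvalue $\lambda$ of $A_k$ with $\operatorname{rank}[\lambda I-A_k,\ B_k]<2n$ satisfies $\lambda=0$ or $\operatorname{Re}\lambda<0$; equivalently there exists $K\in\mathbb R^{k\times2n}$ such that $A_k-B_kK$ has a simple eigenvalue $0$ and all other eigenvalues with negative real part.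
   Context: $n$ vehicles on a single-lane ring road; vehicle $i$ follows vehicle $i-1$, vehicle $1$ follows vehicle $n$. Vehicles with index in $S_{AV}$ are autonomous (acceleration is a control input), the others human-driven. State $x=(\tilde s_1,\tilde v_1,\dots,\tilde s_n,\tilde v_n)^{\mathsf T}$, input $u=(u_{i_1},\dots,u_{i_k})^{\mathsf T}$. Define $A_1=\begin{bmatrix}0&-1\\ \alpha_1&-\alpha_2\end{bmatrix}$, $A_2=\begin{bmatrix}0&1\\0&\alpha_3\end{bmatrix}$, $C_1=\begin{bmatrix}0&-1\\0&0\end{bmatrix}$, $C_2=\begin{bmatrix}0&1\\0&0\end{bmatrix}$. $A_k$ is the $n\times n$ block matrix with $2\times 2$ blocks where, for each $r=1,\dots,n$, block $(r,r)$ is $C_1$ if $r\in S_{AV}$ and $A_1$ otherwise, block $(r,r-1)$ (with $r-1$ read as $n$ when $r=1$) is $C_2$ if $r\in S_{AV}$ and $A_2$ otherwise, and all other blocks are zero. $B_k=[P_1,\dots,P_k]\in\mathbb R^{2n\times k}$, where $P_r$ is the $2n$-vector with a $1$ in entry $2i_r$ and zeros elsewhere. *)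

From HB Require Import structures.
From mathcomp Require Import all_boot all_order all_algebra.
Set Implicit Arguments. Unset Strict Implicit. Unset Printing Implicit Defensive.
Import Order.TTheory GRing.Theory Num.Theory.
Local Open Scope ring_scope.

(* Vehicles are indexed 0..n-1 (paper: 1..n).  State index p : 'I_(2*n):
   vehicle p %/ 2, component p %% 2 (0 = spacing s~, 1 = velocity v~). *)

Section Traffic.
Variable C : numClosedFieldType.

Definition blkA1 (a1 a2 : C) (a b : nat) : C :=
  match a, b with O, S O => -1 | S O, O => a1 | S O, S O => - a2 | _, _ => 0 end.
Definition blkA2 (a3 : C) (a b : nat) : C :=
  match a, b with O, S O => 1 | S O, S O => a3 | _, _ => 0 end.
Definition blkC1 (a b : nat) : C :=
  match a, b with O, S O => -1 | _, _ => 0 end.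
Definition blkC2 (a b : nat) : C :=
  match a, b with O, S O => 1 | _, _ => 0 end.

Definition isAV n (S : {set 'I_n}) (r : nat) : bool := [exists i in S, val i == r].

Definition Ak (a1 a2 a3 : C) n (S : {set 'I_n}) : 'M[C]_(2 * n) :=
  \matrix_(p, q)
    let r := (p %/ 2)%N in let c := (q %/ 2)%N in
    let a := (p %% 2)%N in let b := (q %% 2)%N in
    if c == r then (if isAV S r then blkC1 a b else blkA1 a1 a2 a b)
    else if c == ((r + n - 1) %% n)%N
    then (if isAV S r then blkC2 a b else blkA2 a3 a b)
    else 0.

(* the input matrix B_k, columns ordered by increasing AV index
   (enum_val r is the r-th element of S in increasing order) *)
Definition Bk n (S : {set 'I_n}) : 'M[C]_(2 * n, #|S|) :=
  \matrix_(p, r) (val p == (2 * val (enum_val r : 'I_n)).+1)%N%:R.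

(* w = (1,0,1,0,...,1,0) as a row vector (so w^T A is w *m A) *)
Definition wvec n : 'rV[C]_(2 * n) := \row_j (~~ odd j)%:R.

(* matrix powers for arbitrary size *)
Definition mxpow N (A : 'M[C]_N) (i : nat) : 'M[C]_N := iter i (mulmx A) 1%:M.

(* Controllable subspace (column space of [B, AB, ..., A^(N-1) B]),
   represented as a row space (of the transposes). *)
Definition ctrb_space N m (A : 'M[C]_N) (B : 'M[C]_(N, m)) : 'M[C]_N :=
  (\sum_(i < N) <<B^T *m mxpow A^T i>>)%MS.

Definition controllable N m (A : 'M[C]_N) (B : 'M[C]_(N, m)) : bool :=
  \rank (ctrb_space A B) == N.

Definition uncontrollable_eig N m (A : 'M[C]_N) (B : 'M[C]_(N, m)) (l : C) : bool :=
  eigenvalue A l && (\rank (row_mx (l%:M - A) B) < N)%N.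

(* Matrix of A restricted to the (A-invariant) controllable subspace,
   in the basis row_base (ctrb_space A B). *)
Definition ctrb_restr N m (A : 'M[C]_N) (B : 'M[C]_(N, m))
  : 'M[C]_(\rank (ctrb_space A B)) :=
  let Q := row_base (ctrb_space A B) in Q *m A^T *m pinvmx Q.

(* characteristic polynomial of the uncontrollable part (A_22 in the
   Kalman decomposition) = char_poly A / char_poly (A restricted to the
   controllable subspace) *)
Definition unctrb_char_poly N m (A : 'M[C]_N) (B : 'M[C]_(N, m)) : {poly C} :=
  char_poly A %/ char_poly (ctrb_restr A B).

End Traffic.

From HB Require Import structures.
From mathcomp Require Import all_boot all_order all_algebra.
From mathcomp Require Import zify ring.
Set Implicit Arguments. Unset Strict Implicit. Unset Printing Implicit Defensive.
Import Order.TTheory GRing.Theory Num.Theory.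
Local Open Scope ring_scope.

(* For a left eigenvector y of A_k
   with eigenvalue l <> 0 and y B_k = 0, the velocity entries of the AVs
   vanish; going backwards around the ring from an AV, the two entries of each
   vehicle are then forced to zero unless l^2 + a2 l + a1 = 0, whose roots have
   negative real part.  The same propagation shows that every left vector
   mapped into span w lies in span w, so 0 is simple in the uncontrollable
   part.  The feedback making one AV apply u = -v and every other AV imitate
   human driving yields a closed-loop matrix of the same ring shape, whose
   only extra candidate eigenvalue is -1. *)

Section BlockTriangular.
Variable F : fieldType.

Lemma row_free_completion r s (Q : 'M[F]_(r, r + s)) :
  row_free Q -> exists Q' : 'M_(s, r + s), col_mx Q Q' \in unitmx.
Proof.
move=> freeQ; exists (dsubmx (row_ebase Q)).
have eQ : Q = col_ebase Q *m usubmx (row_ebase Q).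
  rewrite -{1}(mulmx_ebase Q) (eqP freeQ) pid_mx_row -{1}(vsubmxK (row_ebase Q)).
  by rewrite -mulmxA mul_row_col mul1mx mul0mx addr0.
have -> : col_mx Q (dsubmx (row_ebase Q)) =
    block_mx (col_ebase Q) 0 0 1%:M *m row_ebase Q.
  rewrite -[in RHS](vsubmxK (row_ebase Q)) mul_block_col.
  by rewrite !mul0mx mul1mx addr0 add0r -eQ.
rewrite unitmx_mul row_ebase_unit andbT unitmxE det_ublock det1 mulr1 -unitmxE.
exact: col_ebase_unit.
Qed.

Lemma stablemx_conj_lblock r s (A : 'M[F]_(r + s)) Q (Q' : 'M_(s, r + s)) :
  let P := col_mx Q Q' in P \in unitmx -> stablemx Q A ->
  P *m A *m invmx P =
  block_mx (conjmx Q A) 0 (lsubmx (Q' *m A *m invmx P)) (rsubmx (Q' *m A *m invmx P)).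
Proof.
move=> P unitP stableQ; rewrite /block_mx hsubmxK !mul_col_mx; congr col_mx.
have -> : Q *m A = row_mx (conjmx Q A) 0 *m P.
  by rewrite mul_row_col mul0mx addr0 /conjmx mulmxKpV.
by rewrite mulmxK.
Qed.

Lemma char_poly_conj N (A P : 'M[F]_N) : P \in unitmx ->
  char_poly (P *m A *m invmx P) = char_poly A.
Proof.
move=> unitP; rewrite /char_poly /char_poly_mx.
have PV : map_mx polyC P *m map_mx polyC (invmx P) = 1%:M.
  by rewrite -map_mxM mulmxV // map_mx1.
have -> : 'X%:M - map_mx polyC (P *m A *m invmx P) =
    map_mx polyC P *m ('X%:M - map_mx polyC A) *m map_mx polyC (invmx P).
  rewrite mulmxBr mulmxBl !map_mxM; congr (_ - _).
  by rewrite scalar_mxC -mulmxA PV mulmx1.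
by rewrite !det_mulmx mulrAC -det_mulmx PV det1 mul1r.
Qed.

Lemma char_poly_lblock r s (A : 'M[F]_r) (X : 'M_(s, r)) (A' : 'M_s) :
  char_poly (block_mx A 0 X A') = char_poly A * char_poly A'.
Proof.
rewrite /char_poly /char_poly_mx map_block_mx scalar_mx_block opp_block_mx.
by rewrite add_block_mx map_mx0 oppr0 addr0 det_lblock.
Qed.

Lemma char_poly_tr N (A : 'M[F]_N) : char_poly A^T = char_poly A.
Proof.
by rewrite /char_poly -[in RHS]det_tr /char_poly_mx linearB /= tr_scalar_mx map_trmx.
Qed.

Lemma mup0_mulX (p : {poly F}) : ~~ root p 0 -> mup 0 ('X * p) = 1%N.
Proof.
move=> p0; have p_neq0 : p != 0 by apply: contraNneq p0 => ->; rewrite root0.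
rewrite mupM ?polyX_eq0 // (mupNroot p0) addn0.
by have := mup_XsubCX 1 (0 : F) 0; rewrite expr1 subr0 eqxx.
Qed.

(* Complete [w] to a basis: in it, [M] is block lower triangular with a zero
   first row, and the hypothesis on [u] says that the complementary block is
   invertible. *)
Lemma mup0_char_poly (N : nat) (M : 'M[F]_N) (w : 'rV_N) :
  w != 0 -> w *m M = 0 ->
  (forall u : 'rV_N, (u *m M <= w)%MS -> (u <= w)%MS) ->
  mup 0 (char_poly M) = 1%N.
Proof.
case: N M w => [|s] M w w_neq0 wM w_simple.
  by case/negP: w_neq0; apply/eqP/matrixP => ? [].
have free_w : row_free w by rewrite /row_free rank_rV w_neq0.
have [Q' unitP] := row_free_completion (s := s) free_w.
set P := col_mx w Q' in unitP.
have stable_w : stablemx w M by rewrite wM sub0mx.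
have := stablemx_conj_lblock unitP stable_w; rewrite /conjmx wM !mul0mx.
set X := lsubmx _; set M' := rsubmx _ => blockM.
have -> : char_poly M = 'X * char_poly M'.
  rewrite -(char_poly_conj M unitP) blockM.
  transitivity (char_poly (0 : 'M[F]_1) * char_poly M').
    exact: (char_poly_lblock 0 X M').
  congr (_ * _); by rewrite /char_poly /char_poly_mx map_mx0 subr0 det_mx11 mxE mulr1n.
apply: mup0_mulX; rewrite -eigenvalue_root_char.
apply/eigenvalueP => -[y]; rewrite scale0r => yM' y_neq0.
have uM : (row_mx 0 y *m P) *m M = (y *m X) *m w.
  have -> : (row_mx 0 y *m P) *m M = row_mx 0 y *m (P *m M *m invmx P) *m P.
    by rewrite !mulmxA mulmxKV.
  by rewrite blockM mul_row_block !mul0mx !add0r yM' mul_row_col mul0mx addr0.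
have /sub_rVP[d ud] : (row_mx 0 y *m P <= w)%MS.
  by apply: w_simple; rewrite uM submxMl.
have : row_mx 0 y *m P = row_mx d%:M 0 *m P.
  by rewrite ud mul_row_col mul0mx addr0 mul_scalar_mx.
move/(can_inj (mulmxK unitP))/eq_row_mx => [_ y0].
by rewrite y0 eqxx in y_neq0.
Qed.

(* Kalman decomposition, seen from the annihilator: [R] spans the left vectors
   killed by [Q^T] and [M'] is the matrix of [A] acting on them. *)
Lemma kalman_decomposition N r (A : 'M[F]_N) (Q : 'M_(r, N)) :
  row_free Q -> stablemx Q A^T ->
  exists s (M' : 'M_s) (R : 'M_(s, N)),
  [/\ row_free R, R *m Q^T = 0,
      forall u : 'rV_N, u *m Q^T = 0 -> (u <= R)%MS,
      M' *m R = R *m A &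
      char_poly A = char_poly (conjmx Q A^T) * char_poly M'].
Proof.
move=> freeQ stableQ.
have [s eN] : exists s, N = (r + s)%N.
  by exists (N - r)%N; rewrite subnKC // -(eqP freeQ) rank_leq_col.
subst N.
have [Q' unitP] := row_free_completion freeQ.
set P := col_mx Q Q' in unitP.
have := stablemx_conj_lblock unitP stableQ.
set X := lsubmx _; set M' := rsubmx _ => blockA.
set R := dsubmx (invmx P)^T.
have RPt : R *m P^T = row_mx 0 1%:M.
  have := congr1 dsubmx (congr1 trmx (mulmxV unitP)).
  rewrite trmx_mul trmx1 -[(invmx P)^T]vsubmxK mul_col_mx col_mxKd => ->.
  by rewrite scalar_mx_block /block_mx col_mxKd.
have [RQt RQ't] : R *m Q^T = 0 /\ R *m Q'^T = 1%:M.
  by move: RPt; rewrite /P tr_col_mx mul_mx_row => /eq_row_mx.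
have freeR : row_free R.
  rewrite /row_free eqn_leq rank_leq_row -{1}(mxrank1 F s) -RQ't.
  exact: mxrankM_maxl.
exists s, M'^T, R; split => //.
- move=> u uQt; have subR : (R <= kermx Q^T)%MS by apply/sub_kermxP.
  have := mxrank_leqif_sup subR.
  rewrite mxrank_ker mxrank_tr (eqP freeQ) (eqP freeR) addKn => /geq_leqif.
  rewrite leqnn => /esym kerR.
  by apply: submx_trans kerR; apply/sub_kermxP.
- have := congr1 (fun B => dsubmx B^T) blockA.
  rewrite tr_block_mx !trmx_mul trmxK /block_mx col_mxKd.
  rewrite -[(invmx P)^T]vsubmxK !mul_col_mx col_mxKd -/R => RAPt.
  have unitPt : P^T \in unitmx by rewrite unitmx_tr.
  apply: (can_inj (mulmxK unitPt)); apply/esym => /=.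
  by rewrite -mulmxA RAPt -mulmxA RPt mul_mx_row mulmx0 mulmx1 trmx0.
- rewrite -char_poly_tr -(char_poly_conj A^T unitP) blockA char_poly_lblock.
  by rewrite char_poly_tr.
Qed.

Lemma mup0_char_poly_quotient N r (A : 'M[F]_N) (Q : 'M_(r, N)) (w : 'rV_N) :
  row_free Q -> stablemx Q A^T -> w != 0 -> w *m A = 0 -> w *m Q^T = 0 ->
  (forall u : 'rV_N, u *m Q^T = 0 -> (u *m A <= w)%MS -> (u <= w)%MS) ->
  mup 0 (char_poly A %/ char_poly (conjmx Q A^T)) = 1%N.
Proof.
move=> freeQ stableQ w_neq0 wA wQt w_simple.
have [s [M' [R [freeR RQt kerQt RA ->]]]] := kalman_decomposition freeQ stableQ.
rewrite mulKp ?monic_neq0 ?char_poly_monic //.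
have [w' ew] : exists w', w = w' *m R by apply/submxP/kerQt.
have w'_neq0 : w' != 0 by apply: contraNneq w_neq0 => w'0; rewrite ew w'0 mul0mx.
apply: (mup0_char_poly w'_neq0).
  by apply: (row_free_inj freeR); rewrite mul0mx -mulmxA RA mulmxA -ew wA.
move=> u /sub_rVP[c uM'].
have /sub_rVP[d ud] : (u *m R <= w)%MS.
  apply: w_simple; first by rewrite -mulmxA RQt mulmx0.
  by rewrite -mulmxA -RA mulmxA uM' -scalemxAl -ew scalemx_sub.
by apply/sub_rVP; exists d; apply: (row_free_inj freeR); rewrite ud ew scalemxAl.
Qed.

End BlockTriangular.

Section Controllability.
Variable C : numClosedFieldType.
Implicit Types (N m : nat).

Lemma mxpowSr N (A : 'M[C]_N) i : mxpow A i.+1 = mxpow A i *m A.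
Proof.
elim: i => [|i IHi]; first by rewrite /mxpow /= mulmx1 mul1mx.
change (A *m mxpow A i.+1 = (A *m mxpow A i) *m A).
by rewrite IHi mulmxA.
Qed.

Lemma mxpowE N (A : 'M[C]_N.+1) i : mxpow A i = A ^+ i.
Proof. by elim: i => // i IHi; rewrite exprS -IHi. Qed.

Lemma Cayley_Hamilton_expr N (A : 'M[C]_N.+1) :
  A ^+ N.+1 = - \sum_(i < N.+1) (char_poly A)`_i *: A ^+ i.
Proof.
set p := char_poly A; have CH : horner_mx A p = 0 := Cayley_Hamilton A.
have size_p : size p = N.+2 by rewrite size_char_poly.
have lead_p : p`_N.+1 = 1.
  by have /monicP := char_poly_monic A; rewrite /lead_coef size_p.
rewrite -[p]coefK poly_def size_p big_ord_recr /= lead_p scale1r in CH.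
apply/eqP; rewrite -addr_eq0 addrC; apply/eqP; rewrite -[RHS]CH rmorphD /=.
rewrite rmorphXn /= horner_mx_X rmorph_sum /=; congr (_ + _).
by apply: eq_bigr => i _; rewrite linearZ /= rmorphXn /= horner_mx_X.
Qed.

Lemma ctrb_space_stable N m (A : 'M[C]_N) (B : 'M_(N, m)) :
  stablemx (ctrb_space A B) A^T.
Proof.
case: N A B => [|N] A B; first by rewrite thinmx0 sub0mx.
rewrite /ctrb_space sumsmxMr; apply/sumsmx_subP => i _.
rewrite (eqmxMr _ (genmxE _)) -mulmxA -mxpowSr.
have [lt_iN|] := ltnP i.+1 N.+1.
  by apply: (sumsmx_sup (Ordinal lt_iN)) => //; rewrite genmxE.
move=> le_Ni; have -> : i.+1 = N.+1 by have := ltn_ord i; lia.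
rewrite mxpowE Cayley_Hamilton_expr mulmxN mulmx_sumr eqmx_opp.
apply: summx_sub => j _; rewrite -scalemxAr; apply: scalemx_sub.
by apply: (sumsmx_sup j) => //; rewrite genmxE mxpowE.
Qed.

Lemma ctrb_space_input N m (A : 'M[C]_N) (B : 'M_(N, m)) :
  (0 < N)%N -> (B^T <= ctrb_space A B)%MS.
Proof.
move=> N_gt0; apply: (sumsmx_sup (Ordinal N_gt0)) => //.
by rewrite genmxE mulmx1.
Qed.

Lemma uncontrollable_eig_left_vector N m (A : 'M[C]_N) (B : 'M_(N, m)) l :
  uncontrollable_eig A B l ->
  exists y : 'rV_N, [/\ y != 0, y *m A = l *: y & y *m B = 0].
Proof.
case/andP => _ rank_lt.
have : kermx (row_mx (l%:M - A) B) != 0.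
  by rewrite kermx_eq0 /row_free neq_ltn rank_lt.
case/rowV0Pn => y /sub_kermxP; rewrite mul_mx_row => /eqP.
rewrite row_mx_eq0 mulmxBr mul_mx_scalar subr_eq0 => /andP[/eqP yA /eqP yB] y_neq0.
by exists y.
Qed.

Section LeftNullVector.
Variables (N m : nat) (A : 'M[C]_N) (B : 'M[C]_(N, m)) (w : 'rV[C]_N).
Hypotheses (w_neq0 : w != 0) (wA : w *m A = 0) (wB : w *m B = 0).

Lemma ctrb_space_sub_kermx : (ctrb_space A B <= kermx w^T)%MS.
Proof.
apply/sumsmx_subP => -[[|i] lt_iN] _; rewrite genmxE; apply/sub_kermxP.
  by rewrite mulmx1 -trmx_mul wB trmx0.
by rewrite mxpowSr -!mulmxA -trmx_mul wA trmx0 !mulmx0.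
Qed.

Lemma left_null_not_controllable : ~~ controllable A B.
Proof.
apply: contra w_neq0 => /submx_full full_ctrb.
have := submx_trans (full_ctrb N 1%:M) ctrb_space_sub_kermx.
by rewrite sub_kermx mul1mx -trmx0 (inj_eq trmx_inj).
Qed.

Lemma left_null_uncontrollable_eig0 : uncontrollable_eig A B 0.
Proof.
apply/andP; split; first by apply/eigenvalueP; exists w; rewrite ?wA ?scale0r.
rewrite ltn_neqAle rank_leq_row andbT; apply: contra w_neq0 => free_pencil.
apply/eqP/(row_free_inj free_pencil).
by rewrite mul0mx mul_mx_row wB mulmxBr wA mul_mx_scalar scale0r subr0 row_mx0.
Qed.

Lemma mup0_unctrb_char_poly :
  (forall u : 'rV_N, u *m B = 0 -> (u *m A <= w)%MS -> (u <= w)%MS) ->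
  mup 0 (unctrb_char_poly A B) = 1%N.
Proof.
move=> w_simple; set V := ctrb_space A B.
have stableV : stablemx (row_base V) A^T.
  by rewrite stablemx_row_base; exact: ctrb_space_stable.
apply: mup0_char_poly_quotient (row_base_free V) stableV w_neq0 wA _ _.
  have Vw : row_base V *m w^T = 0.
    by apply/sub_kermxP; rewrite eq_row_base ctrb_space_sub_kermx.
  by rewrite -[w]trmxK -trmx_mul Vw trmx0.
move=> u uVt; apply: w_simple.
have N_gt0 : (0 < N)%N by have := rank_leq_col w; rewrite rank_rV w_neq0.
have /submxP[Z eBt] : (B^T <= row_base V)%MS by rewrite eq_row_base ctrb_space_input.
by rewrite -[B]trmxK eBt trmx_mul mulmxA uVt mul0mx.
Qed.

End LeftNullVector.

End Controllability.

(* Imaginary part: [y (2 x + b) = 0]; if [x >= 0] then [y = 0] and the real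
   part [x^2 + b x + c] is positive. *)
Lemma Re_quadratic_root_lt0 (C : numClosedFieldType) (b c l : C) :
  0 < b -> 0 < c -> l ^+ 2 + b * l + c = 0 -> 'Re l < 0.
Proof.
move=> b_gt0 c_gt0 root_l.
have [bR cR] : b \is Num.real /\ c \is Num.real by split; apply: gtr0_real.
have := congr1 (fun z => 'Re z) root_l; have := congr1 (fun z => 'Im z) root_l.
rewrite /= !raddfD /= expr2 !ReM !ImM (Creal_ReP _ bR) (Creal_ReP _ cR).
rewrite (Creal_ImP _ bR) (Creal_ImP _ cR) !raddf0 !mul0r !mulr0 !subr0 !addr0.
set x := 'Re l; set y := 'Im l => eq_im eq_re.
rewrite real_ltNge ?real0 ?Creal_Re //; apply/negP => x_ge0.
have pos : 0 < x + x + b by rewrite ltr_wpDl ?addr_ge0.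
have y0 : y = 0.
  have : y * (x + x + b) = 0 by rewrite -eq_im; ring.
  by move/eqP; rewrite mulf_eq0 (gt_eqF pos) orbF => /eqP.
move: eq_re; rewrite y0 mulr0 subr0 => /eqP; apply/negP; rewrite gt_eqF //.
by apply: lt_le_trans c_gt0 _; rewrite lerDr addr_ge0 // mulr_ge0 // ltW.
Qed.

Section RingIndex.
Variable n : nat.

Lemma ordS_neq (j : 'I_n) : (1 < n)%N -> ordS j != j.
Proof.
move=> n_gt1; apply/eqP => /(congr1 val) /=.
have [/modn_small -> /eqP|le_nj] := ltnP j.+1 n; first by rewrite gtn_eqF.
have -> : j.+1 = n by have := ltn_ord j; lia.
by rewrite modnn => j0; lia.
Qed.

Lemma pred_ring_eq (r j : 'I_n) :
  (j == (r + n - 1) %% n :> nat)%N = (r == ordS j).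
Proof.
have -> : ((r + n - 1) %% n)%N = ord_pred r by rewrite /= subn1.
by apply/eqP/eqP => [/val_inj ->|->]; rewrite ?ord_predK ?ordSK.
Qed.

Lemma ring_down_ind (P : 'I_n -> Prop) (lo : nat) (h : 'I_n) :
  P h -> (forall j : 'I_n, (lo <= j < h)%N -> P (ordS j) -> P j) ->
  forall j : 'I_n, (lo <= j <= h)%N -> P j.
Proof.
move=> Ph step j; move: {2}(h - j)%N (erefl (h - j)%N) => d.
elim: d j => [|d IHd] j hj lo_j_h.
  by rewrite (_ : j = h) //; apply: ord_inj; lia.
have lt_jh : (j < h)%N by lia.
apply: step; first lia.
have ordSj : ordS j = j.+1 :> nat.
  by rewrite /= modn_small //; have := ltn_ord h; lia.
by apply: IHd; rewrite ordSj; lia.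
Qed.

(* Sweep down from [b] to [0], then from [n.-1], whose successor is [0],
   down to [b.+1]. *)
Lemma ring_ind (P : 'I_n -> Prop) (b : 'I_n) :
  P b -> (forall j, j != b -> P (ordS j) -> P j) -> forall j, P j.
Proof.
move=> Pb step.
have neq_b (j : 'I_n) : (j != b) = (j != b :> nat) by [].
have below (j : 'I_n) : (j <= b)%N -> P j.
  move=> le_jb; apply: (ring_down_ind (lo := 0) Pb) => [i lt_ib|]; last lia.
  by apply: step; rewrite neq_b; lia.
have top_lt : (n.-1 < n)%N by have := ltn_ord b; lia.
pose top := Ordinal top_lt.
have Ptop : P top.
  have [->//|top_neq_b] := eqVneq top b.
  apply: step top_neq_b _; apply: below.
  by rewrite /= prednK ?modnn //; have := ltn_ord b; lia.
move=> j; have [|lt_bj] := leqP j b; first exact: below.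
apply: (ring_down_ind (lo := b.+1) Ptop) => [i lt_bi|].
  by apply: step; rewrite neq_b; lia.
by rewrite /=; have := ltn_ord j; lia.
Qed.

End RingIndex.

Section StateIndex.
Variable n : nat.
Implicit Types (j k : 'I_n) (p : 'I_(2 * n)).

(* State coordinates: [sidx j] is the spacing and [vidx j] the velocity of
   vehicle [j]; [vehicle p] is the vehicle owning coordinate [p]. *)
Fact sidx_subproof (j : 'I_n) : (2 * j < 2 * n)%N.
Proof. by have := ltn_ord j; lia. Qed.
Fact vidx_subproof (j : 'I_n) : ((2 * j).+1 < 2 * n)%N.
Proof. by have := ltn_ord j; lia. Qed.
Fact vehicle_subproof (p : 'I_(2 * n)) : (p %/ 2 < n)%N.
Proof. by have := ltn_ord p; lia. Qed.

Definition sidx j := Ordinal (sidx_subproof j).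
Definition vidx j := Ordinal (vidx_subproof j).
Definition vehicle p := Ordinal (vehicle_subproof p).

Lemma sidx_vidx_neq j k : sidx j != vidx k.
Proof. by apply/eqP => /(congr1 val) /=; lia. Qed.

Lemma vehicle_sidx j : vehicle (sidx j) = j.
Proof. by apply: ord_inj => /=; lia. Qed.

Lemma vehicle_vidx j : vehicle (vidx j) = j.
Proof. by apply: ord_inj => /=; lia. Qed.

Lemma idxP p : p = sidx (vehicle p) \/ p = vidx (vehicle p).
Proof.
by have := modn2 p; case: odd => /= p2; [right | left]; apply: ord_inj => /=; lia.
Qed.

Lemma row_idx_eq (R : Type) (u v : 'rV[R]_(2 * n)) :
  (forall j, u 0 (sidx j) = v 0 (sidx j)) ->
  (forall j, u 0 (vidx j) = v 0 (vidx j)) -> u = v.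
Proof. by move=> us uv; apply/rowP => p; case: (idxP p) => ->. Qed.

Lemma sum_idx (R : nmodType) (F : 'I_(2 * n) -> R) :
  \sum_p F p = \sum_(j < n) (F (sidx j) + F (vidx j)).
Proof.
rewrite (partition_big vehicle xpredT) //; apply: eq_bigr => j _.
rewrite (bigD1 (sidx j)) ?vehicle_sidx //= (big_only1 (vidx j)) //=.
  by rewrite (eq_sym (vidx j)) sidx_vidx_neq andbT; apply/eqP/vehicle_vidx.
move=> p p_neq /andP[/eqP pj p_neq_s].
by case: (idxP p) p_neq p_neq_s => ->; rewrite pj eqxx.
Qed.

End StateIndex.

(* How a vehicle sets its acceleration: by the human model, through a free
   control input, or by the feedback [u = - v]. *)
Inductive driver := Human | Actuated | Damped.

Section RingMatrix.
Variables (C : numClosedFieldType) (n : nat) (a1 a2 a3 : C).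
Implicit Types (drv : nat -> driver) (j k : 'I_n) (p q : 'I_(2 * n)).

Definition blkD1 (a b : nat) : C :=
  match a, b with O, S O => -1 | S O, S O => -1 | _, _ => 0 end.

Definition driver_blk (d : driver) : nat -> nat -> C :=
  match d with Human => blkA1 a1 a2 | Actuated => blkC1 C | Damped => blkD1 end.

Definition leader_blk (d : driver) : nat -> nat -> C :=
  if d is Human then blkA2 a3 else blkC2 C.

Definition ring_mx (drv : nat -> driver) : 'M[C]_(2 * n) :=
  \matrix_(p, q)
    let r := (p %/ 2)%N in let c := (q %/ 2)%N in
    let a := (p %% 2)%N in let b := (q %% 2)%N in
    if c == r then driver_blk (drv r) a b
    else if c == ((r + n - 1) %% n)%N then leader_blk (drv r) a b
    else 0.

Definition av_driver (S : {set 'I_n}) (r : nat) : driver :=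
  if isAV S r then Actuated else Human.

Lemma Ak_ring (S : {set 'I_n}) : Ak a1 a2 a3 S = ring_mx (av_driver S).
Proof. by apply/matrixP => p q; rewrite !mxE /av_driver; case: isAV. Qed.

(* Velocity equation of a vehicle:
   [v' = spacing_gain * s - damping * v + leader_gain * v_leader]. *)
Definition spacing_gain (d : driver) : C := if d is Human then a1 else 0.
Definition damping (d : driver) : C :=
  match d with Human => a2 | Actuated => 0 | Damped => 1 end.
Definition leader_gain (d : driver) : C := if d is Human then a3 else 0.

Let idxE := (mul2n, divn2, modn2, doubleK, uphalf_double, odd_double).

Lemma ring_mx_ss drv r j : ring_mx drv (sidx r) (sidx j) = 0.
Proof.
rewrite mxE /= !idxE.
by do 2?case: ifP => _; case: (drv r).
Qed.

Lemma ring_mx_vs drv r j :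
  ring_mx drv (vidx r) (sidx j) = if r == j then spacing_gain (drv r) else 0.
Proof.
rewrite mxE /= !idxE /= !idxE val_eqE eq_sym.
by case: eqP => [->|_]; [|case: ifP]; case: (drv _) => /=.
Qed.

Lemma ring_mx_sv drv r j :
  ring_mx drv (sidx r) (vidx j) = if r == j then -1 else if r == ordS j then 1 else 0.
Proof.
rewrite mxE /= !idxE /= !idxE val_eqE eq_sym pred_ring_eq.
by case: eqP => [->|_]; [|case: ifP]; case: (drv _) => /=.
Qed.

Lemma ring_mx_vv drv r j :
  ring_mx drv (vidx r) (vidx j) =
  if r == j then - damping (drv r) else if r == ordS j then leader_gain (drv r) else 0.
Proof.
rewrite mxE /= !idxE /= !idxE val_eqE eq_sym pred_ring_eq.
by case: eqP => [->|_]; [|case: ifP]; case: (drv _) => /=; rewrite ?oppr0.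
Qed.

Lemma wvec_sidx j : wvec C n 0 (sidx j) = 1.
Proof. by rewrite mxE /= oddM. Qed.

Lemma wvec_vidx j : wvec C n 0 (vidx j) = 0.
Proof. by rewrite mxE /= oddM. Qed.

Lemma ring_mx_sidx_row drv (drv' : nat -> driver) k q :
  ring_mx drv (sidx k) q = ring_mx drv' (sidx k) q.
Proof. by case: (idxP q) => ->; rewrite ?ring_mx_ss ?ring_mx_sv. Qed.

Lemma ring_mx_vidx_row drv (drv' : nat -> driver) k q : drv k = drv' k ->
  ring_mx drv (vidx k) q = ring_mx drv' (vidx k) q.
Proof. by move=> drv_k; case: (idxP q) => ->; rewrite ?ring_mx_vs ?ring_mx_vv drv_k. Qed.

Lemma ring_mx_actuated drv k q : drv k = Actuated -> ring_mx drv (vidx k) q = 0.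
Proof.
move=> drv_k; case: (idxP q) => ->; rewrite ?ring_mx_vs ?ring_mx_vv drv_k /=.
  by case: ifP.
by rewrite oppr0; case: ifP => //; case: ifP.
Qed.

Lemma ring_mx_real drv p q :
  a1 \is Num.real -> a2 \is Num.real -> a3 \is Num.real ->
  ring_mx drv p q \is Num.real.
Proof.
move=> a1R a2R a3R.
case: (idxP p) => ->; case: (idxP q) => ->;
  rewrite ?ring_mx_ss ?ring_mx_vs ?ring_mx_sv ?ring_mx_vv.
all: repeat case: ifP => _; rewrite ?realN ?real0 ?real1 //.
all: by case: (drv _); rewrite /= ?realN ?real0 ?real1.
Qed.

Section InputMatrix.
Variable S : {set 'I_n}.

Lemma isAV_in (j : 'I_n) : isAV S j = (j \in S).
Proof.
apply/existsP/idP => [[i /andP[iS /eqP ij]]|jS]; last by exists j; rewrite jS eqxx.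
by rewrite (ord_inj ij) in iS.
Qed.

Lemma Bk_sidx k r : Bk C S (sidx k) r = 0.
Proof. by rewrite mxE /= (_ : _ == _ = false) //; apply/eqP; lia. Qed.

Lemma Bk_vidx k r : Bk C S (vidx k) r = (k == enum_val r)%:R.
Proof. by rewrite mxE /= eqSS eqn_pmul2l. Qed.

Lemma mulmx_Bk (y : 'rV[C]_(2 * n)) r : (y *m Bk C S) 0 r = y 0 (vidx (enum_val r)).
Proof.
rewrite mxE sum_idx (big_only1 (enum_val r)) //= => [|k k_neq _].
  by rewrite Bk_sidx Bk_vidx eqxx mulr0 mulr1 add0r.
by rewrite Bk_sidx Bk_vidx (negbTE k_neq) !mulr0 addr0.
Qed.

Lemma Bk_left_null (u : 'rV[C]_(2 * n)) j :
  u *m Bk C S = 0 -> j \in S -> u 0 (vidx j) = 0.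
Proof.
by move=> uB jS; rewrite -(enum_rankK_in jS jS) -mulmx_Bk uB mxE.
Qed.

Lemma wvec_Bk : wvec C n *m Bk C S = 0.
Proof. by apply/rowP => r; rewrite mulmx_Bk wvec_vidx mxE. Qed.

Lemma Bk_mul_sidx (K : 'M[C]_(#|S|, 2 * n)) k q : (Bk C S *m K) (sidx k) q = 0.
Proof. by rewrite mxE big1 // => r _; rewrite Bk_sidx mul0r. Qed.

Lemma Bk_mul_vidx (K : 'M[C]_(#|S|, 2 * n)) r q :
  (Bk C S *m K) (vidx (enum_val r)) q = K r q.
Proof.
rewrite mxE (big_only1 r) //= => [|r' r'_neq _]; first by rewrite Bk_vidx eqxx mul1r.
by rewrite Bk_vidx (inj_eq enum_val_inj) eq_sym (negbTE r'_neq) mul0r.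
Qed.

Lemma Bk_mul_vidx_notin (K : 'M[C]_(#|S|, 2 * n)) k q :
  k \notin S -> (Bk C S *m K) (vidx k) q = 0.
Proof.
move=> kS; rewrite mxE big1 // => r _; rewrite Bk_vidx.
by case: eqP => [k_r|]; [move: kS; rewrite k_r enum_valP | rewrite mul0r].
Qed.

End InputMatrix.

Lemma spacing_gain_eq0 d : d <> Human -> spacing_gain d = 0.
Proof. by case: d. Qed.

Lemma leader_gain_eq0 d : d <> Human -> leader_gain d = 0.
Proof. by case: d. Qed.

(* A vehicle of a left eigenvector whose follower contributes nothing. *)
Lemma vehicle_mode_eq0 d (s v l : C) :
  v * spacing_gain d = l * s -> - s - v * damping d = l * v ->
  l != 0 -> l ^+ 2 + a2 * l + a1 != 0 ->
  (d = Damped -> l + 1 != 0) -> (d = Actuated -> v = 0) -> s = 0 /\ v = 0.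
Proof.
move=> eq_s eq_v l_neq0 quad_neq0 damped actuated.
have s0 : l * s = 0 -> s = 0.
  by move/eqP; rewrite mulf_eq0 (negbTE l_neq0) => /eqP.
case: d eq_s eq_v damped actuated => /= eq_s eq_v damped actuated.
- have v0 : v = 0.
    have : v * (l ^+ 2 + a2 * l + a1) = 0.
      have -> : v * (l ^+ 2 + a2 * l + a1) =
          l * (l * v - (- s - v * a2)) + (v * a1 - l * s) by rewrite expr2; ring.
      by rewrite eq_v eq_s !subrr mulr0 addr0.
    by move/eqP; rewrite mulf_eq0 (negbTE quad_neq0) orbF => /eqP.
  by split=> //; apply: s0; rewrite -eq_s v0 mul0r.
- by split; [apply: s0; rewrite -eq_s mulr0 | exact: actuated].
- have s_0 : s = 0 by apply: s0; rewrite -eq_s mulr0.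
  split=> //; have : v * (l + 1) = 0.
    by rewrite mulrDr mulr1 mulrC -eq_v s_0 oppr0 sub0r mulr1 addNr.
  by move/eqP; rewrite mulf_eq0 (negbTE (damped erefl)) orbF => /eqP.
Qed.

Hypothesis n_gt1 : (1 < n)%N.

Lemma mulmx_ring_sidx drv (y : 'rV[C]_(2 * n)) j :
  (y *m ring_mx drv) 0 (sidx j) = y 0 (vidx j) * spacing_gain (drv j).
Proof.
rewrite mxE sum_idx (big_only1 j) //= => [|r r_neq _].
  by rewrite ring_mx_ss ring_mx_vs eqxx mulr0 add0r.
by rewrite ring_mx_ss ring_mx_vs (negbTE r_neq) !mulr0 addr0.
Qed.

Lemma mulmx_ring_vidx drv (y : 'rV[C]_(2 * n)) j :
  (y *m ring_mx drv) 0 (vidx j) =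
  y 0 (sidx (ordS j)) + y 0 (vidx (ordS j)) * leader_gain (drv (ordS j))
  - y 0 (sidx j) - y 0 (vidx j) * damping (drv j).
Proof.
have ordSj_neq := ordS_neq j n_gt1.
rewrite mxE sum_idx (bigD1 j) //= (big_only1 (ordS j)) //= => [|r r_neqS r_neq].
  rewrite !ring_mx_sv !ring_mx_vv eqxx (negbTE ordSj_neq) eqxx.
  by rewrite mulrN1 mulr1 mulrN addrC addrA.
by rewrite ring_mx_sv ring_mx_vv (negbTE r_neq) (negbTE r_neqS) !mulr0 addr0.
Qed.

Lemma wvec_neq0 : wvec C n != 0.
Proof.
have n_gt0 : (0 < n)%N by lia.
apply/eqP => /rowP/(_ (sidx (Ordinal n_gt0))).
by rewrite wvec_sidx mxE; apply/eqP/oner_neq0.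
Qed.

Lemma wvec_ring drv : wvec C n *m ring_mx drv = 0.
Proof.
apply: row_idx_eq => j; rewrite ?mulmx_ring_sidx ?mulmx_ring_vidx [RHS]mxE.
  by rewrite wvec_vidx mul0r.
by rewrite !wvec_sidx !wvec_vidx !mul0r addr0 subr0 subrr.
Qed.

Section RingSpectrum.
Variables (drv : nat -> driver) (j0 : 'I_n).
Hypothesis drv_j0 : drv j0 <> Human.

(* Going backwards around the ring from the non-human vehicle [j0]: the
   follower's contribution vanishes, hence so does the whole vehicle. *)
Lemma ring_left_eigvec_eq0 (y : 'rV[C]_(2 * n)) l :
  y *m ring_mx drv = l *: y -> l != 0 -> l ^+ 2 + a2 * l + a1 != 0 ->
  (forall j : 'I_n, drv j = Damped -> l + 1 != 0) ->
  (forall j : 'I_n, drv j = Actuated -> y 0 (vidx j) = 0) -> y = 0.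
Proof.
move=> yA l_neq0 quad_neq0 damped actuated.
pose lead k := y 0 (sidx k) + y 0 (vidx k) * leader_gain (drv k).
have vehicle0 j : lead (ordS j) = 0 -> y 0 (sidx j) = 0 /\ y 0 (vidx j) = 0.
  move=> lead0; apply: vehicle_mode_eq0 l_neq0 quad_neq0 (@damped j) (@actuated j).
    by rewrite -mulmx_ring_sidx yA mxE.
  by have := mulmx_ring_vidx drv y j; rewrite -/(lead _) lead0 add0r yA mxE => <-.
have lead0 : forall j, lead j = 0.
  apply: (ring_ind (b := j0)) => [|j _ /vehicle0[ys yv]]; last first.
    by rewrite /lead ys yv mul0r addr0.
  have := mulmx_ring_sidx drv y j0; rewrite spacing_gain_eq0 // mulr0 yA mxE.
  move/eqP; rewrite mulf_eq0 (negbTE l_neq0) => /eqP ys0.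
  by rewrite /lead ys0 leader_gain_eq0 // mulr0 addr0.
by apply: row_idx_eq => j; have [ys yv] := vehicle0 j (lead0 _); rewrite mxE.
Qed.

Hypothesis damped_j0 : forall j : 'I_n, drv j = Damped -> j = j0.
Hypothesis a1_neq0 : a1 != 0.

(* Off [j0] the velocities vanish, so the velocity equations make all
   spacings equal around the ring. *)
Lemma ring_left_kernel (u : 'rV[C]_(2 * n)) :
  u *m ring_mx drv = 0 -> (forall j : 'I_n, drv j = Actuated -> u 0 (vidx j) = 0) ->
  u = u 0 (sidx j0) *: wvec C n.
Proof.
move=> uA actuated.
have eq_s j : u 0 (vidx j) * spacing_gain (drv j) = 0.
  by rewrite -mulmx_ring_sidx uA mxE.
have eq_v j : u 0 (sidx (ordS j)) + u 0 (vidx (ordS j)) * leader_gain (drv (ordS j))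
    - u 0 (sidx j) - u 0 (vidx j) * damping (drv j) = 0.
  by rewrite -mulmx_ring_vidx uA mxE.
have uv0 (j : 'I_n) : drv j <> Damped -> u 0 (vidx j) = 0.
  case E : (drv j) => // _; last exact: actuated.
  by move: (eq_s j); rewrite E /= => /eqP; rewrite mulf_eq0 (negbTE a1_neq0) orbF => /eqP.
have lead0 (j : 'I_n) : u 0 (vidx j) * leader_gain (drv j) = 0.
  by case E : (drv j); rewrite /= ?mulr0 // uv0 ?E // mul0r.
have us : forall j : 'I_n, u 0 (sidx j) = u 0 (sidx j0).
  apply: (ring_ind (b := j0)) => // k k_neq <-; apply/eqP; rewrite eq_sym -subr_eq0.
  have := eq_v k; rewrite lead0 addr0 uv0 ?mul0r ?subr0 => [/eqP //|/damped_j0 k_j0].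
  by rewrite k_j0 eqxx in k_neq.
have uv (j : 'I_n) : u 0 (vidx j) = 0.
  case E : (drv j); try by apply: uv0; rewrite E.
  have j_j0 := damped_j0 E; subst j.
  have := eq_v j0; rewrite lead0 addr0 !us subrr sub0r E mulr1.
  by move/eqP; rewrite oppr_eq0 => /eqP.
apply: row_idx_eq => j; rewrite mxE ?wvec_sidx ?wvec_vidx.
  by rewrite mulr1 us.
by rewrite mulr0 uv.
Qed.

Lemma ring_left_sub_wvec (u : 'rV[C]_(2 * n)) :
  (u *m ring_mx drv <= wvec C n)%MS ->
  (forall j : 'I_n, drv j = Actuated -> u 0 (vidx j) = 0) -> (u <= wvec C n)%MS.
Proof.
move=> /sub_rVP[c uA] actuated.
have c0 : c = 0.
  have := mulmx_ring_sidx drv u j0.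
  by rewrite uA spacing_gain_eq0 // mulr0 mxE wvec_sidx mulr1.
rewrite (ring_left_kernel _ actuated) ?scalemx_sub //.
by rewrite uA c0 scale0r.
Qed.

End RingSpectrum.
End RingMatrix.

Definition feedback_driver n (j0 : 'I_n) (r : nat) : driver :=
  if r == j0 then Damped else Human.

(* The feedback makes the AV [j0] apply [u = - v] and every other AV drive
   like a human. *)
Definition feedback_gain (C : numClosedFieldType) n (a1 a2 a3 : C)
    (S : {set 'I_n}) (j0 : 'I_n) : 'M[C]_(#|S|, 2 * n) :=
  \matrix_(r, q) - ring_mx n a1 a2 a3 (feedback_driver j0) (vidx (enum_val r)) q.

Section MixedTraffic.
Variables (C : numClosedFieldType) (n : nat) (S : {set 'I_n}) (a1 a2 a3 : C).
Variable j0 : 'I_n.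
Hypotheses (n_gt1 : (1 < n)%N) (j0S : j0 \in S).
Hypotheses (a1_gt0 : 0 < a1) (a2_gt0 : 0 < a2) (a3_gt0 : 0 < a3).

Local Notation A := (Ak a1 a2 a3 S).
Local Notation B := (Bk C S).
Local Notation K := (feedback_gain a1 a2 a3 S j0).
Local Notation A_cl := (ring_mx n a1 a2 a3 (feedback_driver j0)).

Lemma av_driver_j0 : av_driver S j0 <> Human.
Proof. by rewrite /av_driver isAV_in j0S. Qed.

Lemma feedback_driver_j0 : feedback_driver j0 j0 <> Human.
Proof. by rewrite /feedback_driver eqxx. Qed.

Lemma Bk_left_null_actuated (u : 'rV[C]_(2 * n)) (j : 'I_n) :
  u *m B = 0 -> av_driver S j = Actuated -> u 0 (vidx j) = 0.
Proof. by rewrite /av_driver isAV_in => uB; case: ifP => // /(Bk_left_null uB). Qed.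

Lemma wvec_Ak : wvec C n *m A = 0.
Proof. by rewrite Ak_ring wvec_ring. Qed.

Lemma Ak_left_sub_wvec (u : 'rV[C]_(2 * n)) :
  u *m B = 0 -> (u *m A <= wvec C n)%MS -> (u <= wvec C n)%MS.
Proof.
move=> uB; rewrite Ak_ring => /ring_left_sub_wvec; apply=> //.
- exact: av_driver_j0.
- by move=> j; rewrite /av_driver; case: isAV.
- by rewrite gt_eqF.
- by move=> j; apply: Bk_left_null_actuated.
Qed.

Lemma Ak_Bk_stabilizable l : uncontrollable_eig A B l -> l = 0 \/ 'Re l < 0.
Proof.
move=> /uncontrollable_eig_left_vector[y [y_neq0 yA yB]].
have [->|l_neq0] := eqVneq l 0; [by left | right].
have [quad0|quad_neq0] := eqVneq (l ^+ 2 + a2 * l + a1) 0.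
  exact: Re_quadratic_root_lt0 quad0.
case/eqP: y_neq0; rewrite Ak_ring in yA.
apply: (ring_left_eigvec_eq0 n_gt1 av_driver_j0 yA) => // j.
  by rewrite /av_driver; case: isAV.
exact: Bk_left_null_actuated.
Qed.

Lemma Ak_sub_Bk_feedback : A - B *m K = A_cl.
Proof.
apply/matrixP => p q; rewrite Ak_ring [LHS]mxE [X in _ + X]mxE.
case: (idxP p) => ->; first by rewrite Bk_mul_sidx subr0; apply: ring_mx_sidx_row.
set k := vehicle p; have [kS|kNS] := boolP (k \in S).
  rewrite ring_mx_actuated ?add0r; last by rewrite /av_driver isAV_in kS.
  by rewrite -[in LHS](enum_rankK_in kS kS) Bk_mul_vidx [K _ _]mxE opprK enum_rankK_in.
rewrite Bk_mul_vidx_notin // subr0; apply: ring_mx_vidx_row.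
rewrite /av_driver /feedback_driver isAV_in (negbTE kNS).
by case: eqP => // /ord_inj k_j0; rewrite k_j0 j0S in kNS.
Qed.

Lemma feedback_gain_real : K \is a mxOver Num.real.
Proof. by apply/mxOverP => r q; rewrite mxE rpredN ring_mx_real // gtr0_real. Qed.

Lemma A_cl_left_sub_wvec (u : 'rV[C]_(2 * n)) :
  (u *m A_cl <= wvec C n)%MS -> (u <= wvec C n)%MS.
Proof.
move/ring_left_sub_wvec; apply=> //.
- exact: feedback_driver_j0.
- by move=> j; rewrite /feedback_driver; case: eqP => // /ord_inj.
- by rewrite gt_eqF.
- by move=> j; rewrite /feedback_driver; case: ifP.
Qed.

Lemma mup0_A_cl : mup 0 (char_poly A_cl) = 1%N.
Proof.
apply: mup0_char_poly (wvec_neq0 C n_gt1) (wvec_ring _ _ _ n_gt1 _) _.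
exact: A_cl_left_sub_wvec.
Qed.

Lemma A_cl_stable l : eigenvalue A_cl l -> l != 0 -> 'Re l < 0.
Proof.
move=> /eigenvalueP[y yA y_neq0] l_neq0.
have [l1|l1_neq0] := eqVneq (l + 1) 0.
  have -> : l = -1 by apply/eqP; rewrite -addr_eq0 l1.
  by rewrite raddfN /= (Creal_ReP _ (real1 _)) ltrN10.
have [quad0|quad_neq0] := eqVneq (l ^+ 2 + a2 * l + a1) 0.
  exact: Re_quadratic_root_lt0 quad0.
case/eqP: y_neq0.
apply: (ring_left_eigvec_eq0 n_gt1 feedback_driver_j0 yA) => // j.
by rewrite /feedback_driver; case: ifP.
Qed.

End MixedTraffic.

Theorem theorem4 (C : numClosedFieldType) (n : nat) (S : {set 'I_n})
    (a1 a2 a3 : C) :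
  (2 <= n)%N -> (1 <= #|S|)%N -> (#|S| < n)%N ->
  0 < a1 -> 0 < a3 -> a3 < a2 ->
  let A := Ak a1 a2 a3 S in
  let B := Bk C S in
  (* (1) *)
  [/\ ~~ controllable A B,
      wvec C n *m A = 0,
      wvec C n *m B = 0,
      uncontrollable_eig A B 0
    & mup 0 (unctrb_char_poly A B) = 1%N] /\
  (* (2) *)
  ((forall l : C, uncontrollable_eig A B l -> l = 0 \/ 'Re l < 0) /\
   exists K : 'M[C]_(#|S|, 2 * n),
     [/\ K \is a mxOver Num.real,
         mup 0 (char_poly (A - B *m K)) = 1%N
       & forall l : C, eigenvalue (A - B *m K) l -> l != 0 -> 'Re l < 0]).
Proof.
move=> n_gt1 S_gt0 _ a1_gt0 a3_gt0 a3_lt_a2 A B.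
have a2_gt0 := lt_trans a3_gt0 a3_lt_a2.
have [j0 j0S] : exists j0, j0 \in S by apply/card_gt0P.
have w_neq0 := wvec_neq0 C n_gt1.
have wA : wvec C n *m A = 0 := wvec_Ak S a1 a2 a3 n_gt1.
have wB : wvec C n *m B = 0 := wvec_Bk C S.
split; first split=> //.
- exact: left_null_not_controllable w_neq0 wA wB.
- exact: left_null_uncontrollable_eig0 w_neq0 wA wB.
- exact: mup0_unctrb_char_poly w_neq0 wA wB (Ak_left_sub_wvec n_gt1 j0S a1_gt0).
split; first exact: Ak_Bk_stabilizable n_gt1 j0S a1_gt0 a2_gt0.
exists (feedback_gain a1 a2 a3 S j0); rewrite /A /B Ak_sub_Bk_feedback //.
split; first exact: feedback_gain_real.
- exact: mup0_A_cl.
- exact: A_cl_stable.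
Qed.
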